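(* Let $a_c>b_c>0$, $k_e>0$, $a_e^2=a_c^2+k_e$, $b_e^2=b_c^2+k_e$, let $c$ be the ellipse $x^2/a_c^2+y^2/b_c^2=1$, $e$ the confocal ellipse $x^2/a_e^2+y^2/b_e^2=1$, and $O$ the origin. Let $P_1P_2$ be a chord of $e$ whose line $\ell=[P_1,P_2]$ is tangent to $c$ at the point $Q_1$, and let $R_1$ be the pole of $\ell$ with respect to $e$. Then the signed distances of $O$ and of $R_1$ from the line $\ell$ (measured with respect to one and the same unit normal of $\ell$) have product $-k_e$. Moreover, the lines $[P_1,P_2]$ and $[Q_1,R_1]$ are orthogonal. *)

From mathcomp Require Import all_boot all_order all_algebra.
Set Implicit Arguments. Unset Strict Implicit. Unset Printing Implicit Defensive.
Import Order.TTheory GRing.Theory Num.Theory.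
Local Open Scope ring_scope.

Section Defs.
Variable R : realFieldType.

Definition dot (u v : R * R) : R := u.1 * v.1 + u.2 * v.2.
Definition vsub (u v : R * R) : R * R := (u.1 - v.1, u.2 - v.2).

Definition on_ellipse (a b : R) (X : R * R) : Prop :=
  X.1 ^+ 2 / a ^+ 2 + X.2 ^+ 2 / b ^+ 2 = 1.

Definition on_line (P1 P2 X : R * R) : Prop :=
  exists t : R, X = (P1.1 + t * (P2.1 - P1.1), P1.2 + t * (P2.2 - P1.2)).

Definition tangent_at (a b : R) (P1 P2 Q : R * R) : Prop :=
  [/\ on_ellipse a b Q, on_line P1 P2 Q &
      forall X, on_ellipse a b X -> on_line P1 P2 X -> X = Q].

Definition on_polar (a b : R) (Rp X : R * R) : Prop :=
  Rp.1 * X.1 / a ^+ 2 + Rp.2 * X.2 / b ^+ 2 = 1.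

Definition is_pole (a b : R) (P1 P2 Rp : R * R) : Prop :=
  forall X, on_polar a b Rp X <-> on_line P1 P2 X.

Definition unit_normal (P1 P2 n : R * R) : Prop :=
  dot n n = 1 /\ dot n (vsub P2 P1) = 0.

Definition signed_dist (P1 n X : R * R) : R := dot n (vsub X P1).

End Defs.

From mathcomp Require Import all_boot all_order all_algebra.
From mathcomp Require Import ring lra.
Set Implicit Arguments. Unset Strict Implicit. Unset Printing Implicit Defensive.
Import Order.TTheory GRing.Theory Num.Theory.
Local Open Scope ring_scope.

(* Write [p] for the normal vector (R1.1 / ae^2, R1.2 / be^2), so that the
   pole R1 of the chord is (p.1 ae^2, p.2 be^2) and the chord is [p . X = 1].
   A line tangent to an ellipse at Q is the polar of Q, so the point of contact
   is Q1 = (p.1 ac^2, p.2 bc^2).  Confocality then gives R1 - Q1 = ke p, which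
   is normal to the chord; and any unit normal is n = k p with k^2 |p|^2 = 1,
   so the signed distances of O and R1 are -k and k ke |p|^2. *)

Section PlaneGeometry.
Variable R : realFieldType.
Implicit Types (a b k : R) (u v w d X Y Q : R * R).

Definition ellipse_normal a b X : R * R := (X.1 / a ^+ 2, X.2 / b ^+ 2).

Lemma dotC u v : dot u v = dot v u.
Proof. by rewrite /dot mulrC [u.2 * _]mulrC. Qed.

Lemma dot_vsubl u v w : dot (vsub u v) w = dot u w - dot v w.
Proof. by rewrite /dot /=; ring. Qed.

Lemma dot_vsubr u v w : dot u (vsub v w) = dot u v - dot u w.
Proof. by rewrite /dot /=; ring. Qed.

Lemma dot_scalel k u v : dot (k * u.1, k * u.2) v = k * dot u v.
Proof. by rewrite /dot /=; ring. Qed.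

Lemma dot_self_eq0 v : (dot v v == 0) = (v == (0, 0)).
Proof.
by case: v => v1 v2; rewrite /dot -!expr2 paddr_eq0 ?sqr_ge0 // !sqrf_eq0 xpair_eqE.
Qed.

Lemma vsub_eq0 u v : (vsub u v == (0, 0)) = (u == v).
Proof.
by case: u v => [u1 u2] [v1 v2]; rewrite /vsub !xpair_eqE !subr_eq0.
Qed.

Lemma vsub_neq0 (P1 P2 : R * R) : P1 <> P2 -> vsub P2 P1 != (0, 0).
Proof. by move=> P12; rewrite vsub_eq0; apply/eqP=> /esym. Qed.

Lemma scale_eq0 k v :
  ((k * v.1, k * v.2) == (0, 0)) = (k == 0) || (v == (0, 0)).
Proof. by case: v => v1 v2; rewrite !xpair_eqE !mulf_eq0 /=; case: (k == 0). Qed.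

Lemma dot_eq1_neq0 u X : dot u X = 1 -> u != (0, 0).
Proof.
by apply: contra_eq_neq => ->; rewrite /dot /= !mul0r addr0 eq_sym oner_eq0.
Qed.

Lemma orthogonal_parallel d u v : d != (0, 0) ->
  dot u d = 0 -> dot v d = 0 -> u.1 * v.2 = u.2 * v.1.
Proof.
case: d => d1 d2 d0 ud vd; apply/eqP; rewrite -subr_eq0; apply/eqP.
have cross_d1 : (u.1 * v.2 - u.2 * v.1) * d1
    = v.2 * dot u (d1, d2) - u.2 * dot v (d1, d2) by rewrite /dot /=; ring.
have cross_d2 : (u.1 * v.2 - u.2 * v.1) * d2
    = u.1 * dot v (d1, d2) - v.1 * dot u (d1, d2) by rewrite /dot /=; ring.
rewrite ud vd !mulr0 subrr in cross_d1 cross_d2.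
move: d0; rewrite xpair_eqE negb_and => /orP[] dn0.
- by move/eqP: cross_d1; rewrite mulf_eq0 (negbTE dn0) orbF => /eqP.
- by move/eqP: cross_d2; rewrite mulf_eq0 (negbTE dn0) orbF => /eqP.
Qed.

Lemma orthogonal_common_scale d u v : d != (0, 0) -> v != (0, 0) ->
  dot u d = 0 -> dot v d = 0 -> exists k, u = (k * v.1, k * v.2).
Proof.
move=> d0 v0 ud vd; have cross := orthogonal_parallel d0 ud vd.
have vv0 : dot v v != 0 by rewrite dot_self_eq0.
exists (dot u v / dot v v); case: u {ud} cross => u1 u2 /= cross.
congr pair; apply: (mulIf vv0); rewrite mulrAC divfK //.
all: apply/eqP; rewrite -subr_eq0.
- have -> : u1 * dot v v - dot (u1, u2) v * v.1 = v.2 * (u1 * v.2 - u2 * v.1).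
    by rewrite /dot /=; ring.
  by rewrite cross subrr mulr0.
- have -> : u2 * dot v v - dot (u1, u2) v * v.2 = v.1 * (u2 * v.1 - u1 * v.2).
    by rewrite /dot /=; ring.
  by rewrite cross subrr mulr0.
Qed.

Lemma on_line_start (P1 P2 : R * R) : on_line P1 P2 P1.
Proof. by exists 0; rewrite !mul0r !addr0 -surjective_pairing. Qed.

Lemma on_line_end (P1 P2 : R * R) : on_line P1 P2 P2.
Proof. by exists 1; rewrite !mul1r !subrKC -surjective_pairing. Qed.

Lemma on_line_translate (P1 P2 : R * R) X t : on_line P1 P2 X ->
  on_line P1 P2 (X.1 + t * (vsub P2 P1).1, X.2 + t * (vsub P2 P1).2).
Proof. by case=> s ->; exists (s + t); congr pair => /=; ring. Qed.

Lemma line_dir_orthogonal (P1 P2 : R * R) u c :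
  (forall X, on_line P1 P2 X -> dot u X = c) -> dot u (vsub P2 P1) = 0.
Proof.
move=> line_u; rewrite dot_vsubr (line_u _ (on_line_end P1 P2)).
by rewrite (line_u _ (on_line_start P1 P2)) subrr.
Qed.

Lemma on_ellipseE a b X :
  on_ellipse a b X = (dot (ellipse_normal a b X) X = 1).
Proof.
by rewrite /on_ellipse /dot /= [X.1 / _ * _]mulrAC [X.2 / _ * _]mulrAC -!expr2.
Qed.

Lemma on_polarE a b Rp X :
  on_polar a b Rp X = (dot (ellipse_normal a b Rp) X = 1).
Proof.
by rewrite /on_polar /dot /= [Rp.1 / _ * _]mulrAC [Rp.2 / _ * _]mulrAC.
Qed.

Lemma ellipse_form_translate a b X d t :
  let Y := (X.1 + t * d.1, X.2 + t * d.2) in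
  dot (ellipse_normal a b Y) Y = dot (ellipse_normal a b X) X
    + t * (2 * dot (ellipse_normal a b X) d + t * dot (ellipse_normal a b d) d).
Proof. by rewrite /dot /=; ring. Qed.

Lemma ellipse_form_gt0 a b d : a != 0 -> b != 0 -> d != (0, 0) ->
  0 < dot (ellipse_normal a b d) d.
Proof.
case: d => d1 d2 a0 b0; rewrite xpair_eqE negb_and /dot /=.
rewrite [d1 / _ * _]mulrAC [d2 / _ * _]mulrAC -!expr2.
have sqr_div_ge0 (x c : R) : 0 <= x ^+ 2 / c ^+ 2 by rewrite divr_ge0 ?sqr_ge0.
have sqr_div_gt0 (x c : R) : x != 0 -> c != 0 -> 0 < x ^+ 2 / c ^+ 2.
  by move=> x0 c0; rewrite divr_gt0 ?exprn_even_gt0 ?x0 ?c0.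
case/orP=> dn0.
- by have := sqr_div_gt0 d1 a dn0 a0; have := sqr_div_ge0 d2 b; lra.
- by have := sqr_div_gt0 d2 b dn0 b0; have := sqr_div_ge0 d1 a; lra.
Qed.

Lemma tangent_at_orthogonal a b (P1 P2 : R * R) Q : a != 0 -> b != 0 ->
  P1 <> P2 -> tangent_at a b P1 P2 Q ->
  dot (ellipse_normal a b Q) (vsub P2 P1) = 0.
Proof.
move=> a0 b0 P12 [Q_ell Q_line Q_uniq]; set d := vsub P2 P1.
set B := dot (ellipse_normal a b Q) d; set D := dot (ellipse_normal a b d) d.
have D_gt0 : 0 < D by apply: ellipse_form_gt0 => //; apply: vsub_neq0.
(* Q + t d is the second intersection of the line with the ellipse, so
   tangency forces t = 0. *)
set t := - (2 * B) / D.
have tD : t * D = - (2 * B) by rewrite /t divfK // gt_eqF.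
have Y_ell : on_ellipse a b (Q.1 + t * d.1, Q.2 + t * d.2).
  rewrite on_ellipseE ellipse_form_translate -/B -/D.
  by move: Q_ell; rewrite on_ellipseE => ->; rewrite tD subrr mulr0 addr0.
have Y_Q := Q_uniq _ Y_ell (on_line_translate t Q_line).
move/(congr1 (fun Y => vsub Y Q)): Y_Q.
rewrite /vsub /= !subrr [_ - Q.1]addrC [_ - Q.2]addrC !addKr => -[td1 td2].
have : t * D = 0.
  have -> : t * D = (t * d.1) * (d.1 / a ^+ 2) + (t * d.2) * (d.2 / b ^+ 2).
    by rewrite /D /dot /=; ring.
  by rewrite td1 td2 !mul0r addr0.
by rewrite tD => /eqP; rewrite oppr_eq0 mulf_eq0 pnatr_eq0 => /eqP.
Qed.

Lemma tangent_at_polar a b (P1 P2 : R * R) Q u : a != 0 -> b != 0 ->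
  P1 <> P2 -> tangent_at a b P1 P2 Q ->
  (forall X, on_line P1 P2 X -> dot u X = 1) ->
  ellipse_normal a b Q = u.
Proof.
move=> a0 b0 P12 tQ line_u; have [Q_ell Q_line _] := tQ.
have uQ : dot u Q = 1 := line_u Q Q_line.
have ud := line_dir_orthogonal line_u.
set w := vsub (ellipse_normal a b Q) u.
have wd : dot w (vsub P2 P1) = 0.
  by rewrite dot_vsubl ud (tangent_at_orthogonal a0 b0 P12 tQ) subrr.
have [k wk] := orthogonal_common_scale (vsub_neq0 P12) (dot_eq1_neq0 uQ) wd ud.
have k0 : k = 0.
  have : dot w Q = 0.
    by move: Q_ell; rewrite dot_vsubl uQ on_ellipseE => ->; rewrite subrr.
  by rewrite wk dot_scalel uQ mulr1.
by apply/eqP; rewrite -vsub_eq0 -/w wk scale_eq0 k0 eqxx.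
Qed.

Lemma confocal_normal_vsub a b a' b' k X Y :
  a != 0 -> b != 0 -> a' != 0 -> b' != 0 ->
  a' ^+ 2 = a ^+ 2 + k -> b' ^+ 2 = b ^+ 2 + k ->
  ellipse_normal a' b' X = ellipse_normal a b Y ->
  vsub X Y = (k * (ellipse_normal a b Y).1, k * (ellipse_normal a b Y).2).
Proof.
case: X Y => x1 x2 [y1 y2] a0 b0 a'0 b'0 ea eb [e1 e2]; rewrite /vsub /=.
congr pair.
- by rewrite -[x1](divfK (expf_neq0 2 a'0)) e1 ea; field.
- by rewrite -[x2](divfK (expf_neq0 2 b'0)) e2 eb; field.
Qed.

Lemma signed_dist_scale (P1 : R * R) p k X : dot p P1 = 1 ->
  signed_dist P1 (k * p.1, k * p.2) X = k * (dot p X - 1).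
Proof. by move=> pP1; rewrite /signed_dist dot_scalel dot_vsubr pP1. Qed.

End PlaneGeometry.

Theorem lemma2p4 (R : realFieldType) (ac bc ke ae be : R)
  (P1 P2 Q1 R1 : R * R) :
  0 < bc -> bc < ac -> 0 < ke ->
  ae ^+ 2 = ac ^+ 2 + ke -> be ^+ 2 = bc ^+ 2 + ke ->
  P1 <> P2 -> on_ellipse ae be P1 -> on_ellipse ae be P2 ->
  tangent_at ac bc P1 P2 Q1 ->
  is_pole ae be P1 P2 R1 ->
  (forall n : R * R, unit_normal P1 P2 n ->
     signed_dist P1 n (0, 0) * signed_dist P1 n R1 = - ke)
  /\ (Q1 <> R1 /\ dot (vsub P2 P1) (vsub R1 Q1) = 0).
Proof.
move=> bc_gt0 bc_lt_ac ke_gt0 hae hbe P12 _ _ tangent pole.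
have ac0 : ac != 0 by rewrite gt_eqF // (lt_trans bc_gt0).
have bc0 : bc != 0 by rewrite gt_eqF.
have ae0 : ae != 0 by rewrite -sqrf_eq0 hae gt_eqF // ltr_wpDl ?sqr_ge0.
have be0 : be != 0 by rewrite -sqrf_eq0 hbe gt_eqF // ltr_wpDl ?sqr_ge0.
set p := ellipse_normal ae be R1.
have line_p X : on_line P1 P2 X -> dot p X = 1 by move/pole; rewrite on_polarE.
have pd := line_dir_orthogonal line_p.
have [_ Q1_line _] := tangent.
have pQ1 : dot p Q1 = 1 := line_p Q1 Q1_line.
have p0 := dot_eq1_neq0 pQ1.
have Q1_normal : ellipse_normal ac bc Q1 = p.
  exact: tangent_at_polar ac0 bc0 P12 tangent line_p.
have R1Q1 := confocal_normal_vsub ac0 bc0 ae0 be0 hae hbe (esym Q1_normal).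
rewrite Q1_normal in R1Q1.
have pR1 : dot p R1 = ke * dot p p + 1.
  by rewrite -[LHS](subrK (dot p Q1)) -dot_vsubr R1Q1 dotC dot_scalel pQ1.
split; [|split].
- move=> n [nn nd].
  have [k nk] := orthogonal_common_scale (vsub_neq0 P12) p0 nd pd.
  rewrite nk dot_scalel dotC dot_scalel in nn.
  rewrite nk !(signed_dist_scale _ _ (line_p _ (on_line_start P1 P2))) pR1 addrK.
  have -> : dot p (0, 0) = 0 by rewrite /dot /= !mulr0 addr0.
  by rewrite -[RHS]mulr1 -[in RHS]nn; ring.
- move=> Q1R1.
  have : (ke * p.1, ke * p.2) == (0, 0) by rewrite -R1Q1 vsub_eq0 Q1R1.
  by rewrite scale_eq0 (gt_eqF ke_gt0) (negbTE p0).
- by rewrite R1Q1 dotC dot_scalel pd mulr0.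
Qed.
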